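(* Let $P$ and $Q$ be Standard Meadow Forms (SMFs). Then each of the terms $P+Q$, $P\cdot Q$, $-P$ and $P^{-1}$ is provably equal, from the axioms $\mathrm{Md}$ in equational logic, to an SMF whose variables are among the variables occurring in $P$ and $Q$.
   Context: The signature of meadows is $\Sigma_m=(0,1,+,\cdot,-,{}^{-1})$. $\mathrm{Md}$ is the set of equations: $(x+y)+z=x+(y+z)$, $x+y=y+x$, $x+0=x$, $x+(-x)=0$, $(x\cdot y)\cdot z=x\cdot(y\cdot z)$, $x\cdot y=y\cdot x$, $1\cdot x=x$, $x\cdot(y+z)=x\cdot y+x\cdot z$, $(x^{-1})^{-1}=x$, $x\cdot(x\cdot x^{-1})=x$. Notation: $t/u$ abbreviates $t\cdot u^{-1}$; $1_t$ abbreviates $t\cdot t^{-1}$ and $0_t$ abbreviates $1-1_t$ (i.e. $1+(-1_t)$). A polynomial is a $\Sigma_m$-term not containing ${}^{-1}$. SMFs of level $n$ are defined inductively: an SMF of level $0$ is any term $s/t$ with $s,t$ polynomials; an SMF of level $n+1$ is any term $0_t\cdot P+1_t\cdot Q$ with $t$ a polynomial and $P,Q$ SMFs of level $n$. A term is an SMF if it is an SMF of some level $n\in\mathbb N$. *)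

From Stdlib Require Import List.

Inductive term : Type :=
| Var : nat -> term
| Zero : term
| One : term
| Add : term -> term -> term
| Mul : term -> term -> term
| Neg : term -> term
| Inv : term -> term.

Definition Div (t u : term) : term := Mul t (Inv u).
Definition one_ (t : term) : term := Mul t (Inv t).
Definition zero_ (t : term) : term := Add One (Neg (one_ t)).

Inductive Md_eq : term -> term -> Prop :=
| md_addA x y z : Md_eq (Add (Add x y) z) (Add x (Add y z))
| md_addC x y : Md_eq (Add x y) (Add y x)
| md_add0 x : Md_eq (Add x Zero) x
| md_addN x : Md_eq (Add x (Neg x)) Zero
| md_mulA x y z : Md_eq (Mul (Mul x y) z) (Mul x (Mul y z))
| md_mulC x y : Md_eq (Mul x y) (Mul y x)
| md_mul1 x : Md_eq (Mul One x) x
| md_mulD x y z : Md_eq (Mul x (Add y z)) (Add (Mul x y) (Mul x z))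
| md_invK x : Md_eq (Inv (Inv x)) x
| md_RIL x : Md_eq (Mul x (Mul x (Inv x))) x
| md_refl t : Md_eq t t
| md_sym t u : Md_eq t u -> Md_eq u t
| md_trans t u v : Md_eq t u -> Md_eq u v -> Md_eq t v
| md_cong_add t t' u u' : Md_eq t t' -> Md_eq u u' -> Md_eq (Add t u) (Add t' u')
| md_cong_mul t t' u u' : Md_eq t t' -> Md_eq u u' -> Md_eq (Mul t u) (Mul t' u')
| md_cong_neg t t' : Md_eq t t' -> Md_eq (Neg t) (Neg t')
| md_cong_inv t t' : Md_eq t t' -> Md_eq (Inv t) (Inv t').

Fixpoint is_poly (t : term) : Prop :=
  match t with
  | Var _ | Zero | One => True
  | Add a b | Mul a b => is_poly a /\ is_poly b
  | Neg a => is_poly a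
  | Inv _ => False
  end.

Inductive SMF_level : nat -> term -> Prop :=
| smf0 s t : is_poly s -> is_poly t -> SMF_level 0 (Div s t)
| smfS n t P Q : is_poly t -> SMF_level n P -> SMF_level n Q ->
    SMF_level (S n) (Add (Mul (zero_ t) P) (Mul (one_ t) Q)).

Definition SMF (t : term) : Prop := exists n, SMF_level n t.

Fixpoint occurs (v : nat) (t : term) : Prop :=
  match t with
  | Var w => v = w
  | Zero | One => False
  | Add a b | Mul a b => occurs v a \/ occurs v b
  | Neg a | Inv a => occurs v a
  end.

Definition provably_SMF_in (t P Q : term) : Prop :=
  exists R, SMF R /\ (forall v, occurs v R -> occurs v P \/ occurs v Q)
            /\ Md_eq t R.

(* The key consequence is that every operation distributes over a case
   distinction 0_t·A + 1_t·B (for ⁻¹ because 0_t and 1_t are orthogonal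
   idempotents).

   The second part shows, by induction on the level, that an operation which
   distributes over case distinctions and maps fractions s/t (of polynomials)
   to SMF-representable terms maps all SMFs to SMF-representable terms,
   keeping the variables among the given ones.  The level-0 cases are:
   -(s/t) = (-s)/t, (s/t)⁻¹ = t/s, (s/t)·(u/v) = (su)/(tv), and
   s/t + u/v = 0_t·(u/v) + 1_t·(0_v·(s/t) + 1_v·((sv+ut)/(tv))). *)

From Stdlib Require Import Setoid Morphisms Ring Lia.

#[global] Instance md_equiv : Equivalence Md_eq.
Proof. split; [exact md_refl | exact md_sym | exact md_trans]. Qed.

#[global] Instance add_proper : Proper (Md_eq ==> Md_eq ==> Md_eq) Add.
Proof. intros ? ? ? ? ? ?; now apply md_cong_add. Qed.

#[global] Instance mul_proper : Proper (Md_eq ==> Md_eq ==> Md_eq) Mul.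
Proof. intros ? ? ? ? ? ?; now apply md_cong_mul. Qed.

#[global] Instance neg_proper : Proper (Md_eq ==> Md_eq) Neg.
Proof. intros ? ? ?; now apply md_cong_neg. Qed.

#[global] Instance inv_proper : Proper (Md_eq ==> Md_eq) Inv.
Proof. intros ? ? ?; now apply md_cong_inv. Qed.

Definition Sub (x y : term) : term := Add x (Neg y).

Lemma md_ring_theory : ring_theory Zero One Add Mul Sub Neg Md_eq.
Proof.
  split; intros.
  - rewrite md_addC; apply md_add0.
  - apply md_addC.
  - symmetry; apply md_addA.
  - apply md_mul1.
  - apply md_mulC.
  - symmetry; apply md_mulA.
  - rewrite md_mulC, md_mulD, (md_mulC z x), (md_mulC z y); reflexivity.
  - reflexivity.
  - apply md_addN.
Qed.

Lemma md_ring_ext : ring_eq_ext Add Mul Neg Md_eq.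
Proof. constructor; typeclasses eauto. Qed.

Add Ring md_ring : md_ring_theory (setoid md_equiv md_ring_ext).

Lemma mul_sq_inv x : Md_eq (Mul (Mul x x) (Inv x)) x.
Proof. transitivity (Mul x (Mul x (Inv x))); [ring | apply md_RIL]. Qed.

(* The dual law x⁻¹·x⁻¹·x = x⁻¹: the axiom at x⁻¹, using x⁻¹⁻¹ = x. *)
Lemma inv_sq_mul x : Md_eq (Mul (Mul (Inv x) (Inv x)) x) (Inv x).
Proof.
  transitivity (Mul (Inv x) (Mul (Inv x) (Inv (Inv x)))).
  - rewrite md_invK; ring.
  - apply md_RIL.
Qed.

(* x⁻¹ is the unique w with x·x·w = x and w·w·x = w; this is how every
   identity for ⁻¹ below is established. *)
Lemma inv_unique x w :
  Md_eq (Mul (Mul x x) w) x -> Md_eq (Mul (Mul w w) x) w -> Md_eq (Inv x) w.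
Proof.
  intros Hx Hw.
  assert (Hl : Md_eq (Inv x) (Mul w (Mul x (Inv x)))).
  { transitivity (Mul (Mul (Inv x) (Inv x)) (Mul (Mul x x) w)).
    - rewrite Hx; symmetry; apply inv_sq_mul.
    - transitivity (Mul w (Mul x (Mul (Mul (Inv x) (Inv x)) x))); [ring|].
      now rewrite inv_sq_mul. }
  assert (Hr : Md_eq (Mul w (Mul x (Inv x))) w).
  { transitivity (Mul (Mul w w) (Mul (Mul x x) (Inv x))).
    - rewrite <- Hw at 1; ring.
    - now rewrite mul_sq_inv. }
  now rewrite Hl.
Qed.

Lemma inv_mul x y : Md_eq (Inv (Mul x y)) (Mul (Inv x) (Inv y)).
Proof.
  apply inv_unique.
  - transitivity (Mul (Mul (Mul x x) (Inv x)) (Mul (Mul y y) (Inv y))); [ring|].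
    now rewrite !mul_sq_inv.
  - transitivity (Mul (Mul (Mul (Inv x) (Inv x)) x) (Mul (Mul (Inv y) (Inv y)) y));
      [ring|].
    now rewrite !inv_sq_mul.
Qed.

Lemma inv_div s t : Md_eq (Inv (Div s t)) (Div t s).
Proof. unfold Div; rewrite inv_mul, md_invK; ring. Qed.

(* 1_t and 0_t are complementary orthogonal idempotents, and 0_t kills t⁻¹;
   so 0_t·X + 1_t·Y behaves like "if t = 0 then X else Y". *)
Lemma one_idem t : Md_eq (Mul (one_ t) (one_ t)) (one_ t).
Proof.
  unfold one_; transitivity (Mul (Mul (Mul t t) (Inv t)) (Inv t)); [ring|].
  now rewrite mul_sq_inv.
Qed.

Lemma zero_idem t : Md_eq (Mul (zero_ t) (zero_ t)) (zero_ t).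
Proof.
  unfold zero_.
  transitivity (Add (Add One (Neg (one_ t)))
                    (Add (Mul (one_ t) (one_ t)) (Neg (one_ t)))); [ring|].
  rewrite one_idem; ring.
Qed.

Lemma zero_one_orth t : Md_eq (Mul (zero_ t) (one_ t)) Zero.
Proof.
  unfold zero_.
  transitivity (Add (one_ t) (Neg (Mul (one_ t) (one_ t)))); [ring|].
  rewrite one_idem; ring.
Qed.

Lemma zero_mul_div s t : Md_eq (Mul (zero_ t) (Div s t)) Zero.
Proof.
  unfold zero_, one_, Div.
  transitivity (Mul s (Add (Inv t) (Neg (Mul (Mul (Inv t) (Inv t)) t)))); [ring|].
  rewrite inv_sq_mul; ring.
Qed.

Notation cases t A B := (Add (Mul (zero_ t) A) (Mul (one_ t) B)).

(* Case distinctions multiply componentwise, by orthogonality. *)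
Lemma cases_mul t A B C D :
  Md_eq (Mul (cases t A B) (cases t C D)) (cases t (Mul A C) (Mul B D)).
Proof.
  transitivity (Add (Mul (Mul (zero_ t) (zero_ t)) (Mul A C))
                 (Add (Mul (Mul (zero_ t) (one_ t)) (Add (Mul A D) (Mul B C)))
                      (Mul (Mul (one_ t) (one_ t)) (Mul B D)))); [ring|].
  rewrite zero_idem, zero_one_orth, one_idem; ring.
Qed.

Lemma inv_cases t A B : Md_eq (Inv (cases t A B)) (cases t (Inv A) (Inv B)).
Proof.
  apply inv_unique; rewrite !cases_mul.
  - now rewrite !mul_sq_inv.
  - now rewrite !inv_sq_mul.
Qed.

Lemma add_div s t u v :
  Md_eq (Add (Div s t) (Div u v))
        (cases t (Div u v)
                 (cases v (Div s t) (Div (Add (Mul s v) (Mul u t)) (Mul t v)))).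
Proof.
  set (X := Add (Div s t) (Div u v)).
  assert (Hboth : Md_eq (Mul (one_ t) (Mul (one_ v) X))
                        (Mul (one_ t) (Mul (one_ v)
                           (Div (Add (Mul s v) (Mul u t)) (Mul t v))))).
  { unfold X, Div; rewrite inv_mul.
    transitivity (Add (Mul (Mul s (Inv t)) (Mul (one_ t) (Mul (one_ v) (one_ v))))
                      (Mul (Mul u (Inv v)) (Mul (Mul (one_ t) (one_ t)) (one_ v))));
      [rewrite one_idem, one_idem; ring | unfold one_; ring]. }
  transitivity (Add (Add (Mul (zero_ t) (Div u v)) (Mul (zero_ t) (Div s t)))
                  (Add (Mul (one_ t) (Add (Mul (zero_ v) (Div s t))
                                          (Mul (zero_ v) (Div u v))))
                       (Mul (one_ t) (Mul (one_ v) X))));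
    [unfold X, zero_; ring|].
  rewrite Hboth, !zero_mul_div; ring.
Qed.

Definition vars_in (R : term) (V : nat -> Prop) : Prop :=
  forall v, occurs v R -> V v.

Definition representable (V : nat -> Prop) (X : term) : Prop :=
  exists R, SMF R /\ vars_in R V /\ Md_eq X R.

#[global] Instance representable_proper V : Proper (Md_eq ==> iff) (representable V).
Proof.
  intros X Y HXY; split; intros [R [HR [Hvars HR']]]; exists R; repeat split; auto.
  - now rewrite <- HXY.
  - now rewrite HXY.
Qed.

Lemma vars_in_add a b V : vars_in a V -> vars_in b V -> vars_in (Add a b) V.
Proof. intros Ha Hb v [Hv | Hv]; auto. Qed.

Lemma vars_in_mul a b V : vars_in a V -> vars_in b V -> vars_in (Mul a b) V.
Proof. intros Ha Hb v [Hv | Hv]; auto. Qed.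

Lemma vars_in_cases t A B V :
  vars_in (cases t A B) V -> vars_in t V /\ vars_in A V /\ vars_in B V.
Proof. intro H; repeat split; intros v Hv; apply H; cbn; tauto. Qed.

(* An SMF of level n is equal to one of any level m ≥ n with no new
   variables: pad it with the trivial case distinction on 1. *)
Lemma SMF_level_pad n P :
  SMF_level n P -> forall m, n <= m ->
  exists P', SMF_level m P' /\ vars_in P' (fun v => occurs v P) /\ Md_eq P P'.
Proof.
  intros HP m Hnm; induction Hnm as [|m _ [P' [HP' [Hvars HPP']]]].
  - exists P; repeat split; [assumption | intros v Hv; exact Hv | reflexivity].
  - exists (cases One P' P'); repeat split.
    + constructor; cbn; auto.
    + intros v Hv; cbn in Hv; intuition.
    + rewrite HPP'; unfold zero_; ring.
Qed.

Lemma representable_div V s t :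
  is_poly s -> is_poly t -> vars_in s V -> vars_in t V ->
  representable V (Div s t).
Proof.
  intros Hs Ht Hvs Hvt; exists (Div s t); repeat split.
  - exists 0; now constructor.
  - intros v Hv; cbn in Hv; intuition.
  - reflexivity.
Qed.

(* A case distinction on a polynomial between representable terms is
   representable: bring both branches to a common level. *)
Lemma representable_cases V t A B :
  is_poly t -> vars_in t V -> representable V A -> representable V B ->
  representable V (cases t A B).
Proof.
  intros Ht Hvt [RA [[na HA] [HvA HAR]]] [RB [[nb HB] [HvB HBR]]].
  destruct (SMF_level_pad _ _ HA (Nat.max na nb)) as [RA' [HA' [HvA' HRA']]];
    [lia|].
  destruct (SMF_level_pad _ _ HB (Nat.max na nb)) as [RB' [HB' [HvB' HRB']]];
    [lia|].
  exists (cases t RA' RB'); repeat split.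
  - exists (S (Nat.max na nb)); now constructor.
  - intros v Hv; cbn in Hv; unfold vars_in in *; intuition.
  - now rewrite HAR, HBR, HRA', HRB'.
Qed.

Section UnaryClosure.
Variable V : nat -> Prop.
Variable op : term -> term.
Hypothesis op_cases :
  forall t A B, Md_eq (op (cases t A B)) (cases t (op A) (op B)).
Hypothesis op_div : forall s t,
  is_poly s -> is_poly t -> vars_in s V -> vars_in t V ->
  representable V (op (Div s t)).

Lemma unary_closure n P :
  SMF_level n P -> vars_in P V -> representable V (op P).
Proof.
  intros HP; induction HP as [s t Hs Ht | n t P Q Ht _ IHP _ IHQ]; intros Hv.
  - apply op_div; auto; intros v Hv'; apply Hv; cbn; tauto.
  - destruct (vars_in_cases _ _ _ _ Hv) as [Hvt [HvP HvQ]].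
    rewrite op_cases.
    apply representable_cases; auto.
Qed.
End UnaryClosure.

Section BinaryClosure.
Variable V : nat -> Prop.
Variable op : term -> term -> term.
Hypothesis op_cases_l :
  forall t A B C, Md_eq (op (cases t A B) C) (cases t (op A C) (op B C)).
Hypothesis op_cases_r :
  forall t A B C, Md_eq (op C (cases t A B)) (cases t (op C A) (op C B)).
Hypothesis op_div : forall s t u v,
  is_poly s -> is_poly t -> is_poly u -> is_poly v ->
  vars_in s V -> vars_in t V -> vars_in u V -> vars_in v V ->
  representable V (op (Div s t) (Div u v)).

Lemma binary_closure n P m Q :
  SMF_level n P -> vars_in P V -> SMF_level m Q -> vars_in Q V ->
  representable V (op P Q).
Proof.
  intros HP HvP HQ HvQ.
  apply (unary_closure V (fun R => op R Q)) with (n := n); auto.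
  intros s t Hs Ht Hvs Hvt.
  apply (unary_closure V (op (Div s t))) with (n := m); auto.
Qed.
End BinaryClosure.

Lemma neg_closure V n P :
  SMF_level n P -> vars_in P V -> representable V (Neg P).
Proof.
  apply unary_closure; [intros; unfold zero_; ring|].
  intros s t Hs Ht Hvs Hvt.
  assert (Hneg : Md_eq (Neg (Div s t)) (Div (Neg s) t)) by (unfold Div; ring).
  rewrite Hneg; now apply representable_div.
Qed.

Lemma inv_closure V n P :
  SMF_level n P -> vars_in P V -> representable V (Inv P).
Proof.
  apply unary_closure; [exact inv_cases|].
  intros s t Hs Ht Hvs Hvt.
  rewrite inv_div; now apply representable_div.
Qed.

Lemma mul_closure V n P m Q :
  SMF_level n P -> vars_in P V -> SMF_level m Q -> vars_in Q V ->
  representable V (Mul P Q).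
Proof.
  apply binary_closure; [intros; unfold zero_; ring | intros; unfold zero_; ring|].
  intros s t u v Hs Ht Hu Hv Hvs Hvt Hvu Hvv.
  assert (Hmul : Md_eq (Mul (Div s t) (Div u v)) (Div (Mul s u) (Mul t v)))
    by (unfold Div; rewrite inv_mul; ring).
  rewrite Hmul; apply representable_div; cbn; auto using vars_in_mul.
Qed.

Lemma add_closure V n P m Q :
  SMF_level n P -> vars_in P V -> SMF_level m Q -> vars_in Q V ->
  representable V (Add P Q).
Proof.
  apply binary_closure; [intros; unfold zero_; ring | intros; unfold zero_; ring|].
  intros s t u v Hs Ht Hu Hv Hvs Hvt Hvu Hvv.
  rewrite add_div.
  apply representable_cases; auto; [apply representable_div; auto|].
  apply representable_cases; auto; [apply representable_div; auto|].
  apply representable_div; cbn; auto using vars_in_add, vars_in_mul.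
Qed.

Theorem lemma1 (P Q : term) :
  SMF P -> SMF Q ->
  provably_SMF_in (Add P Q) P Q /\
  provably_SMF_in (Mul P Q) P Q /\
  provably_SMF_in (Neg P) P Q /\
  provably_SMF_in (Inv P) P Q.
Proof.
  intros [n HP] [m HQ].
  set (V := fun v => occurs v P \/ occurs v Q).
  assert (HvP : vars_in P V) by (intros v Hv; now left).
  assert (HvQ : vars_in Q V) by (intros v Hv; now right).
  split; [|split; [|split]].
  - exact (add_closure V n P m Q HP HvP HQ HvQ).
  - exact (mul_closure V n P m Q HP HvP HQ HvQ).
  - exact (neg_closure V n P HP HvP).
  - exact (inv_closure V n P HP HvP).
Qed.
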